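(* $\mathrm{Log}_{<1}(\mathbb{Q})\subseteq\mathrm{Log}_{<1}(\mathbb{R})$.
   Context: Modal formulas are built from a countable set of propositional variables using $\bot$, $\to$ and one unary modality $\lozenge$. A frame is a pair $(X,R)$; a valuation assigns subsets of $X$ to variables; $x\models\lozenge\varphi$ iff there is $y$ with $xRy$ and $y\models\varphi$. A formula is valid in a frame if true at every point under every valuation. For a metric space $(X,d)$, $\mathrm{Log}_{<1}(X)$ is the set of modal formulas valid in the frame $(X,R_{<1})$, where $xR_{<1}y$ iff $d(x,y)<1$. $\mathbb{R}$ and $\mathbb{Q}$ carry the metric $d(x,y)=|x-y|$. *)

From Stdlib Require Import Reals QArith Qabs.

Inductive form : Type :=
| Var : nat -> form
| Bot : form
| Imp : form -> form -> form
| Dia : form -> form.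

Fixpoint sat {X : Type} (R : X -> X -> Prop) (V : nat -> X -> Prop)
  (x : X) (phi : form) : Prop :=
  match phi with
  | Var n => V n x
  | Bot => False
  | Imp a b => sat R V x a -> sat R V x b
  | Dia a => exists y, R x y /\ sat R V y a
  end.

Definition valid_in {X : Type} (R : X -> X -> Prop) (phi : form) : Prop :=
  forall (V : nat -> X -> Prop) (x : X), sat R V x phi.

Definition R_lt1_R (x y : R) : Prop := (Rabs (x - y) < 1)%R.
(* The rationals as the subspace of R consisting of rational reals
   (avoids Stdlib Q's non-canonical representations). *)
Definition QinR : Type := { x : R | exists q : Q, x = Q2R q }.
Definition R_lt1_Q (x y : QinR) : Prop := (Rabs (proj1_sig x - proj1_sig y) < 1)%R.

Definition Log_lt1_R (phi : form) : Prop := valid_in R_lt1_R phi.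
Definition Log_lt1_Q (phi : form) : Prop := valid_in R_lt1_Q phi.

(* Fix a valuation on the reals, a point x0 and a formula phi with subformulas fs.
   Choosing, in every rational interval, a point of every fs-type realized there gives
   a countable dense set D of reals.  Cantor's back-and-forth argument makes
   Q ∩ [0,1) order-isomorphic to {0} ∪ frac (D - x0), and extending this isomorphism
   1-periodically yields a strictly increasing G : Q -> R with G 0 = x0 and
   G (a + 1) = G a + 1 whose image contains D.  Such a G preserves and reflects
   |a - b| < 1, and every R_<1-successor of G a has the fs-type of some G b with
   |a - b| < 1.  So phi holds at a point of Q under the valuation pulled back along G
   iff it holds at its image, and a countermodel on R gives one on Q. *)

From Stdlib Require Import Reals ZArith QArith Qreals Lra Lia List ClassicalEpsilon Cantor.
Import ListNotations.
Open Scope R_scope.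

Lemma finite_max {X : Type} (l : list X) (P : X -> Prop) (f : X -> R) (d : R) :
  exists m, (m = d \/ exists x, In x l /\ P x /\ f x = m) /\
            forall x, In x l -> P x -> f x <= m.
Proof.
  induction l as [|x l (m & Hm & Hle)].
  - exists d. split; [now left | intros _ []].
  - destruct (classic (P x /\ m < f x)) as [[Px Hlt]|Hn].
    + exists (f x). split; [right; exists x; simpl; auto|].
      intros y [<-|Hy] Py; [lra | specialize (Hle y Hy Py); lra].
    + exists m. split.
      * destruct Hm as [|(y & ? & ? & ?)]; [now left | right; exists y; simpl; auto].
      * intros y [<-|Hy] Py; [apply Rnot_lt_le; tauto | auto].
Qed.

Lemma finite_min {X : Type} (l : list X) (P : X -> Prop) (f : X -> R) (d : R) :
  exists m, (m = d \/ exists x, In x l /\ P x /\ f x = m) /\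
            forall x, In x l -> P x -> m <= f x.
Proof.
  destruct (finite_max l P (fun x => - f x) (- d)) as (m & Hm & Hle).
  exists (- m). split.
  - destruct Hm as [->|(x & ? & ? & <-)]; [left; ring | right; exists x; repeat split; auto; ring].
  - intros x Hx Px. specialize (Hle x Hx Px). lra.
Qed.

Section PartialIsomorphisms.
Variables A B : R -> Prop.

Definition partial_iso (L : list (R * R)) : Prop :=
  (forall p, In p L -> A (fst p) /\ B (snd p)) /\
  (forall p p', In p L -> In p' L -> (fst p < fst p' <-> snd p < snd p')).

Lemma partial_iso_cons L a b : partial_iso L -> A a -> B b ->
  (forall p, In p L -> (fst p < a <-> snd p < b) /\ (a < fst p <-> b < snd p)) ->
  partial_iso ((a, b) :: L).
Proof.
  intros [HAB Hord] Ha Hb Hab. split.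
  - intros p [<-|Hp]; auto.
  - intros p p' [<-|Hp] [<-|Hp']; simpl; try apply Hab; auto. split; lra.
Qed.

Hypothesis A_unit : forall x, A x -> 0 <= x < 1.
Hypothesis B_unit : forall y, B y -> 0 <= y < 1.
Hypothesis B_dense : forall u v, 0 <= u -> u < v -> v <= 1 -> exists y, B y /\ u < y < v.

Lemma partial_iso_extend L a : partial_iso L -> In (0, 0) L -> A a ->
  exists b, partial_iso ((a, b) :: L).
Proof.
  intros HL H00 Ha. destruct HL as [HAB Hord].
  destruct (classic (exists p, In p L /\ fst p = a)) as [[p [Hp <-]]|Hnew].
  { exists (snd p). apply partial_iso_cons;
      [split; assumption | apply HAB, Hp | apply HAB, Hp | intros q Hq; split; apply Hord; assumption]. }
  destruct (finite_max L (fun p => fst p < a) snd 0) as (lo & Hlo & Hbelow).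
  destruct (finite_min L (fun p => a < fst p) snd 1) as (hi & Hhi & Habove).
  assert (Hlo0 : 0 <= lo).
  { destruct Hlo as [->|(p & Hp & _ & <-)]; [lra | apply B_unit, HAB, Hp]. }
  assert (Hhi1 : hi <= 1).
  { destruct Hhi as [->|(p & Hp & _ & <-)]; [lra | left; apply B_unit, HAB, Hp]. }
  assert (Hlohi : lo < hi).
  { destruct (A_unit a Ha) as [Ha0 Ha1].
    destruct Hlo as [->|(q & Hq & Hqa & <-)]; destruct Hhi as [->|(q' & Hq' & Hqa' & <-)].
    - lra.
    - apply (Hord (0, 0) q' H00 Hq'). simpl. lra.
    - apply B_unit, HAB, Hq.
    - apply (Hord q q' Hq Hq'). lra. }
  destruct (B_dense lo hi Hlo0 Hlohi Hhi1) as (b & Hb & Hlob & Hbhi).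
  exists b. apply partial_iso_cons; [split; assumption | assumption | assumption |].
  intros p Hp.
  assert (Hne : fst p <> a) by (intro E; apply Hnew; exists p; auto).
  specialize (Hbelow p Hp). specialize (Habove p Hp).
  destruct (Rtotal_order (fst p) a) as [h|[h|h]]; [|contradiction|];
    split; split; intro; solve [lra | specialize (Hbelow h); lra | specialize (Habove h); lra].
Qed.
End PartialIsomorphisms.

Definition swap_pairs (L : list (R * R)) : list (R * R) := map (fun p => (snd p, fst p)) L.

Lemma swap_pairs_involutive L : swap_pairs (swap_pairs L) = L.
Proof. induction L as [|[x y] L IH]; [reflexivity|]. unfold swap_pairs in *. simpl. now rewrite IH. Qed.

Lemma in_swap_pairs x y L : In (x, y) L -> In (y, x) (swap_pairs L).
Proof. intros H. apply (in_map (fun p => (snd p, fst p)) L (x, y) H). Qed.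

Lemma partial_iso_swap A B L : partial_iso A B L -> partial_iso B A (swap_pairs L).
Proof.
  intros [HAB Hord]. unfold swap_pairs. split.
  - intros p (q & <- & Hq)%in_map_iff. simpl. pose proof (HAB q Hq). tauto.
  - intros p p' (q & <- & Hq)%in_map_iff (q' & <- & Hq')%in_map_iff. simpl.
    symmetry. auto.
Qed.

Section BackAndForth.
Variables ea eb : nat -> R.
Let A x := exists n, ea n = x.
Let B y := exists n, eb n = y.
Hypothesis A_unit : forall x, A x -> 0 <= x < 1.
Hypothesis B_unit : forall y, B y -> 0 <= y < 1.
Hypothesis A_zero : A 0.
Hypothesis B_zero : B 0.
Hypothesis A_dense : forall u v, 0 <= u -> u < v -> v <= 1 -> exists x, A x /\ u < x < v.
Hypothesis B_dense : forall u v, 0 <= u -> u < v -> v <= 1 -> exists y, B y /\ u < y < v.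

Definition extend_forth L a := (a, epsilon (inhabits 0) (fun b => partial_iso A B ((a, b) :: L))) :: L.
Definition extend_back L b := (epsilon (inhabits 0) (fun a => partial_iso A B ((a, b) :: L)), b) :: L.

Lemma partial_iso_extend_forth L a : partial_iso A B L -> In (0, 0) L -> A a ->
  partial_iso A B (extend_forth L a).
Proof.
  intros. apply (epsilon_spec _ (fun b => partial_iso A B ((a, b) :: L))).
  apply partial_iso_extend; auto.
Qed.

Lemma partial_iso_extend_back L b : partial_iso A B L -> In (0, 0) L -> B b ->
  partial_iso A B (extend_back L b).
Proof.
  intros HL H00 Hb. apply (epsilon_spec _ (fun a => partial_iso A B ((a, b) :: L))).
  destruct (partial_iso_extend B A B_unit A_unit A_dense (swap_pairs L) b) as [a Ha]; auto.
  - apply partial_iso_swap, HL.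
  - apply in_swap_pairs, H00.
  - exists a. rewrite <- (swap_pairs_involutive ((a, b) :: L)). apply partial_iso_swap, Ha.
Qed.

Fixpoint chain (n : nat) : list (R * R) :=
  match n with
  | O => [(0, 0)]
  | S n => extend_back (extend_forth (chain n) (ea n)) (eb n)
  end.

Lemma chain_partial_iso n : partial_iso A B (chain n) /\ In (0, 0) (chain n).
Proof.
  induction n as [|n [IH H00]]; simpl.
  - split; [split|now left].
    + intros p [<-|[]]. split; assumption.
    + intros p p' [<-|[]] [<-|[]]. simpl. split; lra.
  - assert (HA : A (ea n)) by (exists n; reflexivity).
    assert (HB : B (eb n)) by (exists n; reflexivity).
    split; [|right; right; exact H00].
    apply partial_iso_extend_back; [apply partial_iso_extend_forth | right |]; auto.
Qed.

Lemma chain_incl n m : (n <= m)%nat -> incl (chain n) (chain m).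
Proof.
  induction 1 as [|m _ IH]; [apply incl_refl|].
  intros p Hp. simpl. right; right. apply IH, Hp.
Qed.

Definition in_chain p := exists n, In p (chain n).

Lemma in_chain_order p p' : in_chain p -> in_chain p' -> (fst p < fst p' <-> snd p < snd p').
Proof.
  intros [n Hn] [m Hm].
  apply (proj2 (proj1 (chain_partial_iso (n + m))));
    [apply (chain_incl n) | apply (chain_incl m)]; auto; lia.
Qed.

Lemma in_chain_functional x y y' : in_chain (x, y) -> in_chain (x, y') -> y = y'.
Proof.
  intros H H'.
  pose proof (in_chain_order _ _ H H') as Hlt. pose proof (in_chain_order _ _ H' H) as Hgt.
  simpl in Hlt, Hgt.
  destruct (Rtotal_order y y') as [h|[h|h]]; [apply Hlt in h | | apply Hgt in h]; lra.
Qed.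

Theorem back_and_forth : exists F : R -> R,
  (forall x, A x -> B (F x)) /\ (forall x x', A x -> A x' -> x < x' -> F x < F x') /\
  (forall y, B y -> exists x, A x /\ F x = y) /\ F 0 = 0.
Proof.
  set (F x := epsilon (inhabits 0) (fun y => in_chain (x, y))).
  assert (HF : forall x, A x -> in_chain (x, F x)).
  { intros x [n <-]. apply epsilon_spec. eexists; exists (S n). simpl. right; left; reflexivity. }
  assert (HAB : forall p, in_chain p -> A (fst p) /\ B (snd p)).
  { intros p [n Hn]. apply (proj1 (proj1 (chain_partial_iso n))), Hn. }
  exists F. split; [|split; [|split]].
  - intros x Hx. apply (HAB (x, F x)), HF, Hx.
  - intros x x' Hx Hx'. apply (in_chain_order (x, F x) (x', F x')); auto.
  - intros y [n <-].
    assert (Hx : exists x, in_chain (x, eb n)) by (eexists; exists (S n); left; reflexivity).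
    destruct Hx as [x Hx]. exists x. split; [apply (HAB _ Hx)|].
    apply (in_chain_functional x); [apply HF, (HAB _ Hx) | exact Hx].
  - apply (in_chain_functional 0); [apply HF, A_zero | exists O; now left].
Qed.
End BackAndForth.

Definition rational (x : R) : Prop := exists q : Q, x = Q2R q.

Lemma rational_IZR z : rational (IZR z).
Proof. exists (inject_Z z). unfold Q2R. simpl. rewrite Rinv_1. ring. Qed.

Lemma rational_plus x y : rational x -> rational y -> rational (x + y).
Proof. intros [p ->] [q ->]. exists (p + q)%Q. symmetry. apply Q2R_plus. Qed.

Lemma rational_minus x y : rational x -> rational y -> rational (x - y).
Proof. intros [p ->] [q ->]. exists (p - q)%Q. symmetry. apply Q2R_minus. Qed.

Lemma rational_frac_part x : rational x -> rational (frac_part x).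
Proof. intros Hx. apply rational_minus; [exact Hx | apply rational_IZR]. Qed.

Lemma rational_dense u v : u < v -> exists q, u < Q2R q < v.
Proof.
  intros Huv. destruct (archimed_cor1 (v - u)) as [N [HN HN0]]; [lra|].
  assert (HNpos : 0 < INR N) by (apply lt_0_INR; exact HN0).
  destruct (archimed (u * INR N)) as [Hz1 Hz2].
  exists (up (u * INR N) # Pos.of_nat N).
  assert (E : Q2R (up (u * INR N) # Pos.of_nat N) = IZR (up (u * INR N)) / INR N).
  { unfold Q2R. simpl. rewrite INR_IZR_INZ, <- positive_nat_Z, Nat2Pos.id by lia. reflexivity. }
  rewrite E. split.
  - apply Rmult_lt_reg_r with (INR N); [exact HNpos|]. field_simplify; lra.
  - apply Rmult_lt_reg_r with (INR N); [exact HNpos|]. field_simplify; [|lra].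
    apply Rmult_lt_compat_r with (r := INR N) in HN; [|exact HNpos].
    field_simplify in HN; lra.
Qed.

Definition qenum (n : nat) : Q :=
  let (a, b) := Cantor.of_nat n in
  let (c, d) := Cantor.of_nat a in
  (Z.of_nat c - Z.of_nat d) # Pos.of_nat b.

Lemma qenum_surj q : exists n, qenum n = q.
Proof.
  destruct q as [z p].
  exists (Cantor.to_nat (Cantor.to_nat (Z.to_nat z, Z.to_nat (- z)), Pos.to_nat p)).
  unfold qenum. rewrite !Cantor.cancel_of_to. f_equal; [lia | apply Pos2Nat.id].
Qed.

Lemma qenum_dense u v : u < v -> exists n, u < Q2R (qenum n) < v.
Proof.
  intros Huv. destruct (rational_dense u v Huv) as [q Hq].
  destruct (qenum_surj q) as [n <-]. exists n. exact Hq.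
Qed.

Lemma frac_part_id x : 0 <= x < 1 -> frac_part x = x.
Proof.
  intros Hx. symmetry. apply (Int_part_frac_part_spec x 0 x Hx). simpl. ring.
Qed.

Lemma frac_part_unit x : 0 <= frac_part x < 1.
Proof. pose proof (base_fp x). lra. Qed.

Lemma Int_part_plus1 x : Int_part (x + 1) = (Int_part x + 1)%Z.
Proof.
  symmetry. apply (Int_part_frac_part_spec _ _ (frac_part x) (frac_part_unit x)).
  rewrite plus_IZR, (Rplus_Int_part_frac_part x) at 1. ring.
Qed.

Lemma frac_part_plus1 x : frac_part (x + 1) = frac_part x.
Proof. unfold frac_part. rewrite Int_part_plus1, plus_IZR. ring. Qed.

Lemma frac_part_dense (e : nat -> R) : (forall u v, u < v -> exists n, u < e n < v) ->
  forall u v, 0 <= u -> u < v -> v <= 1 -> exists y, (exists n, frac_part (e n) = y) /\ u < y < v.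
Proof.
  intros He u v Hu Huv Hv. destruct (He u v Huv) as [n Hn].
  exists (e n). split; [exists n; apply frac_part_id|]; lra.
Qed.

Section PeriodicExtension.
Variables (S : R -> Prop) (F : R -> R) (c : R).
Hypothesis F_unit : forall a, S a -> 0 <= F (frac_part a) < 1.
Hypothesis F_increasing : forall a b, S a -> S b ->
  frac_part a < frac_part b -> F (frac_part a) < F (frac_part b).

Definition periodic_extension (a : R) : R := c + IZR (Int_part a) + F (frac_part a).

Lemma periodic_extension_split z x : 0 <= x < 1 ->
  periodic_extension (IZR z + x) = c + IZR z + F x.
Proof.
  intros Hx. unfold periodic_extension.
  destruct (Int_part_frac_part_spec (IZR z + x) z x Hx eq_refl) as [<- <-]. reflexivity.
Qed.

Lemma periodic_extension_plus1 a : periodic_extension (a + 1) = periodic_extension a + 1.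
Proof. unfold periodic_extension. rewrite Int_part_plus1, frac_part_plus1, plus_IZR. ring. Qed.

Lemma periodic_extension_increasing a b : S a -> S b -> a < b ->
  periodic_extension a < periodic_extension b.
Proof.
  intros Ha Hb Hab. unfold periodic_extension.
  pose proof (Rplus_Int_part_frac_part a). pose proof (Rplus_Int_part_frac_part b).
  pose proof (frac_part_unit a). pose proof (frac_part_unit b).
  assert (Hint : (Int_part a <= Int_part b)%Z).
  { apply Z.lt_succ_r, lt_IZR. rewrite succ_IZR. lra. }
  destruct (Z.eq_dec (Int_part a) (Int_part b)) as [E|E].
  - rewrite E in *. assert (F (frac_part a) < F (frac_part b)) by (apply F_increasing; auto; lra).
    lra.
  - assert (IZR (Int_part a) + 1 <= IZR (Int_part b)) by (rewrite <- succ_IZR; apply IZR_le; lia).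
    pose proof (F_unit a Ha). pose proof (F_unit b Hb). lra.
Qed.
End PeriodicExtension.

Lemma Rabs_lt1_iff x y : Rabs (x - y) < 1 <-> y < x + 1 /\ x < y + 1.
Proof.
  split.
  - intros H%Rabs_def2. lra.
  - intros H. apply Rabs_def1; lra.
Qed.

Section ShiftEquivariant.
Variables (S : R -> Prop) (G : R -> R).
Hypothesis S_plus1 : forall a, S a -> S (a + 1).
Hypothesis G_plus1 : forall a, G (a + 1) = G a + 1.
Hypothesis G_increasing : forall a b, S a -> S b -> a < b -> G a < G b.

Lemma increasing_lt_iff a b : S a -> S b -> (a < b <-> G a < G b).
Proof.
  intros Ha Hb. split; [apply G_increasing; auto|].
  intros HG. destruct (Rtotal_order a b) as [h|[<-|h]]; [exact h| |]; exfalso.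
  - lra.
  - pose proof (G_increasing b a Hb Ha h). lra.
Qed.

Lemma shift_equivariant_Rabs_lt1 a b : S a -> S b ->
  (Rabs (a - b) < 1 <-> Rabs (G a - G b) < 1).
Proof.
  intros Ha Hb. rewrite !Rabs_lt1_iff, <- !G_plus1.
  rewrite <- !increasing_lt_iff by auto. reflexivity.
Qed.
End ShiftEquivariant.

Lemma exists_periodic_rational_embedding (x0 : R) (e : nat -> R) :
  (forall u v, u < v -> exists n, u < e n < v) ->
  exists G : R -> R, G 0 = x0 /\ (forall a, G (a + 1) = G a + 1) /\
    (forall a b, rational a -> rational b -> a < b -> G a < G b) /\
    (forall n, exists b, rational b /\ G b = e n).
Proof.
  intros He.
  set (ea n := frac_part (Q2R (qenum n))).
  set (eb n := match n with O => 0 | S n => frac_part (e n - x0) end).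
  assert (HA : forall a, rational a -> exists n, ea n = frac_part a).
  { intros a [q ->]. destruct (qenum_surj q) as [n <-]. exists n. reflexivity. }
  destruct (back_and_forth ea eb) as (F & HFB & HFmono & HFsurj & HF0).
  - intros x [n <-]. apply frac_part_unit.
  - intros y [[|n] <-]; [simpl; lra | apply frac_part_unit].
  - destruct (HA 0) as [n Hn]; [exists 0%Q; unfold Q2R; simpl; ring|].
    exists n. rewrite Hn. apply fp_R0.
  - exists O. reflexivity.
  - apply frac_part_dense, qenum_dense.
  - intros u v Hu Huv Hv.
    destruct (frac_part_dense (fun n => e n - x0)) with u v as (y & [n Hn] & Hy); auto.
    { intros u' v' H'. destruct (He (x0 + u') (x0 + v')) as [n Hn]; [lra|].
      exists n. lra. }
    exists y. split; [exists (S n); exact Hn | exact Hy].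
  - exists (periodic_extension F x0). split; [|split; [|split]].
    + replace 0 with (IZR 0 + 0) at 1 by (simpl; ring).
      rewrite periodic_extension_split, HF0 by lra. simpl. ring.
    + apply periodic_extension_plus1.
    + apply periodic_extension_increasing with (S := rational).
      * intros a Ha. destruct (HFB _ (HA a Ha)) as [[|n] <-]; [simpl; lra | apply frac_part_unit].
      * intros a b Ha Hb. apply HFmono; [apply HA, Ha | apply HA, Hb].
    + intros n.
      destruct (HFsurj (frac_part (e n - x0))) as (s & [m <-] & Hs); [exists (S n); reflexivity|].
      exists (IZR (Int_part (e n - x0)) + ea m). split.
      * apply rational_plus; [apply rational_IZR | apply rational_frac_part; eexists; reflexivity].
      * rewrite periodic_extension_split, Hs by apply frac_part_unit.
        unfold frac_part. ring.
Qed.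

Fixpoint pos_of_bits (l : list bool) : positive :=
  match l with
  | [] => xH
  | true :: l => xI (pos_of_bits l)
  | false :: l => xO (pos_of_bits l)
  end.

Lemma pos_of_bits_inj l l' : pos_of_bits l = pos_of_bits l' -> l = l'.
Proof.
  revert l'. induction l as [|[] l IH]; intros [|[] l'] H; simpl in H;
    try discriminate; try reflexivity; injection H as H; f_equal; auto.
Qed.

Section RealizingTypes.
Variables (T : Type) (P : T -> R -> Prop) (ts : list T).

Definition type_code (r : R) : nat :=
  Pos.to_nat (pos_of_bits
    (map (fun t => if excluded_middle_informative (P t r) then true else false) ts)).

Lemma type_code_eq r r' : type_code r = type_code r' -> forall t, In t ts -> (P t r <-> P t r').
Proof.
  intros H%Pos2Nat.inj%pos_of_bits_inj t Ht. rewrite map_ext_in_iff in H.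
  specialize (H t Ht). simpl in H.
  destruct (excluded_middle_informative (P t r)), (excluded_middle_informative (P t r'));
    easy.
Qed.

(* Index n encodes two rationals and a type code; type_enum n is a point strictly
   between the rationals with that code, or junk if there is none. *)
Definition type_enum (n : nat) : R :=
  let (k, m) := Cantor.of_nat n in
  let (i, j) := Cantor.of_nat k in
  epsilon (inhabits 0) (fun r => Q2R (qenum i) < r < Q2R (qenum j) /\ type_code r = m).

Lemma type_enum_realizes u r v : u < r < v ->
  exists n, u < type_enum n < v /\ forall t, In t ts -> (P t (type_enum n) <-> P t r).
Proof.
  intros [Hur Hrv].
  destruct (rational_dense u r Hur) as [p Hp]. destruct (qenum_surj p) as [i <-].
  destruct (rational_dense r v Hrv) as [q Hq]. destruct (qenum_surj q) as [j <-].
  exists (Cantor.to_nat (Cantor.to_nat (i, j), type_code r)).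
  unfold type_enum. rewrite !Cantor.cancel_of_to.
  set (d := epsilon _ _).
  assert (Hd : Q2R (qenum i) < d < Q2R (qenum j) /\ type_code d = type_code r).
  { apply (epsilon_spec _ (fun d => Q2R (qenum i) < d < Q2R (qenum j) /\ type_code d = type_code r)).
    exists r. split; [lra | reflexivity]. }
  split; [lra | apply type_code_eq, Hd].
Qed.

Lemma type_enum_dense u v : u < v -> exists n, u < type_enum n < v.
Proof.
  intros Huv. destruct (type_enum_realizes u ((u + v) / 2) v) as [n [Hn _]]; [lra|].
  exists n. exact Hn.
Qed.
End RealizingTypes.

Fixpoint subformulas (phi : form) : list form :=
  phi :: match phi with
         | Imp a b => subformulas a ++ subformulas b
         | Dia a => subformulas a
         | _ => []
         end.

Section Transfer.
Variables (X Y : Type) (RX : X -> X -> Prop) (RY : Y -> Y -> Prop).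
Variables (V : nat -> Y -> Prop) (f : X -> Y) (fs : list form).
Hypothesis forth : forall x x', RX x x' -> RY (f x) (f x').
Hypothesis back : forall x y, RY (f x) y ->
  exists x', RX x x' /\ forall psi, In psi fs -> (sat RY V (f x') psi <-> sat RY V y psi).

Lemma sat_transfer psi : incl (subformulas psi) fs ->
  forall x, sat RX (fun n x => V n (f x)) x psi <-> sat RY V (f x) psi.
Proof.
  induction psi as [n| |a IHa b IHb|a IHa]; intros Hsub x; simpl; try tauto.
  - assert (Ha : incl (subformulas a) fs) by (intros y Hy; apply Hsub; right; apply in_or_app; auto).
    assert (Hb : incl (subformulas b) fs) by (intros y Hy; apply Hsub; right; apply in_or_app; auto).
    rewrite IHa, IHb by assumption. tauto.
  - assert (Ha : incl (subformulas a) fs) by (intros y Hy; apply Hsub; right; exact Hy).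
    split.
    + intros (x' & Hx' & Hsat). exists (f x'). split; [auto | apply IHa; auto].
    + intros (y & Hy & Hsat). destruct (back x y Hy) as (x' & Hx' & Htype).
      exists x'. split; [exact Hx'|]. apply IHa, Htype; auto.
      apply Ha. destruct a; now left.
Qed.
End Transfer.

Lemma rationals_embed_up_to_types (V : nat -> R -> Prop) (fs : list form) (x0 : R) :
  exists (f : QinR -> R) (q0 : QinR), f q0 = x0 /\
    (forall q q', R_lt1_Q q q' -> R_lt1_R (f q) (f q')) /\
    (forall q r, R_lt1_R (f q) r -> exists q', R_lt1_Q q q' /\
       forall psi, In psi fs -> (sat R_lt1_R V (f q') psi <-> sat R_lt1_R V r psi)).
Proof.
  set (P psi r := sat R_lt1_R V r psi).
  destruct (exists_periodic_rational_embedding x0 (type_enum _ P fs) (type_enum_dense _ P fs))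
    as (G & HG0 & HG1 & HGinc & HGsurj).
  assert (HGlt1 : forall a b, rational a -> rational b ->
                    (Rabs (a - b) < 1 <-> Rabs (G a - G b) < 1)).
  { apply shift_equivariant_Rabs_lt1; auto.
    intros a Ha. apply rational_plus; [exact Ha | apply (rational_IZR 1)]. }
  exists (fun q => G (proj1_sig q)), (exist rational 0 (rational_IZR 0)).
  split; [exact HG0|]. split.
  - intros [a Ha] [b Hb]. apply HGlt1; auto.
  - intros [a Ha] r Hr. simpl in Hr. apply Rabs_lt1_iff in Hr.
    destruct (type_enum_realizes _ P fs (G a - 1) r (G a + 1)) as (n & Hn & Htype); [lra|].
    destruct (HGsurj n) as (b & Hb & HGb).
    exists (exist rational b Hb). split.
    + apply HGlt1; auto. simpl. rewrite HGb. apply Rabs_lt1_iff. lra.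
    + simpl. rewrite HGb. exact Htype.
Qed.

Theorem theorem4p12 : forall phi : form, Log_lt1_Q phi -> Log_lt1_R phi.
Proof.
  intros phi HQ V x0.
  destruct (rationals_embed_up_to_types V (subformulas phi) x0)
    as (f & q0 & <- & Hforth & Hback).
  apply (sat_transfer _ _ R_lt1_Q R_lt1_R V f (subformulas phi) Hforth Hback phi (incl_refl _)).
  apply HQ.
Qed.
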